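(* Let $r\ge 2$, let $H$ be a digraph (possibly with loops), and let $D$ be an $H$-colored $r$-transitive digraph. For every $k \geq r$, $D$ has a $(k,H)$-kernel.
   Context: All digraphs are finite. A digraph $D$ is $r$-transitive if for all distinct $u,v\in V(D)$, whenever there is a directed $uv$-path of length $r$, the arc $(u,v)$ belongs to $A(D)$. $D$ has no loops and comes with a map $\rho: A(D)\to V(H)$. For a walk $W=(x_0,\ldots,x_n)$ in $D$, there is an obstruction on $x_i$ if $(\rho(x_{i-1},x_i),\rho(x_i,x_{i+1})) \notin A(H)$; for an open walk this is considered at internal vertices $x_i$, $1\le i\le n-1$, for a closed walk at all $i\in\{0,\ldots,n-1\}$ with indices modulo $n$. $O_H(W)$ is the set of indices with an obstruction; the $H$-length is $l_H(W)=|O_H(W)|+1$ for open $W$ and $|O_H(W)|$ for closed $W$. A $(k,H)$-kernel ($k\ge2$) is a set $S\subseteq V(D)$ such that for every two distinct $u,v\in S$ every directed $uv$-path in $D$ has $H$-length at least $k$, and for every $x\in V(D)\setminus S$ there is a directed path from $x$ to a vertex of $S$ of $H$-length at most $k-1$. *)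

From mathcomp Require Import all_boot.
Set Implicit Arguments. Unset Strict Implicit. Unset Printing Implicit Defensive.

Section HColored.
Variables (V VH : finType) (A : rel V) (AH : rel VH) (rho : V -> V -> VH).

(* A walk/path is represented by its sequence of vertices [x_0; ...; x_n]. *)
Definition dpath (p : seq V) : bool :=
  if p is x :: q then path A x q && uniq p else false.

Definition dpath_from_to (u v : V) (p : seq V) : bool :=
  [&& dpath p, head u p == u & last u p == v].

Definition wlen (p : seq V) : nat := (size p).-1.

(* Number of obstructions at the internal vertices x_1 .. x_{n-1} of an
   open walk: x_i is an obstruction iff (rho(x_{i-1},x_i), rho(x_i,x_{i+1}))
   is not an arc of H. *)
Fixpoint nobs (p : seq V) : nat :=
  match p with
  | x :: ((y :: z :: _) as q) => (~~ AH (rho x y) (rho y z)) + nobs q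
  | _ => 0
  end.

Definition hlen (p : seq V) : nat := (nobs p).+1.

Definition r_transitive (r : nat) : Prop :=
  forall u v : V, u != v ->
    (exists p, dpath_from_to u v p && (wlen p == r)) -> A u v.

Definition kH_kernel (k : nat) (S : {set V}) : Prop :=
  (forall u v : V, u \in S -> v \in S -> u != v ->
     forall p, dpath_from_to u v p -> k <= hlen p) /\
  (forall x : V, x \notin S ->
     exists s, exists p, [&& s \in S, dpath_from_to x s p & hlen p <= k.-1]).

End HColored.

(* The kernel consists of one vertex from each terminal strong component of D.
   No directed path joins two distinct such vertices, so the first kernel
   condition holds vacuously, and every vertex reaches one of them.
   By r-transitivity a directed path of length at least r has a chord from its
   origin to its r-th vertex, so the shortest path to the kernel has length at
   most r-1; its H-length is at most its length, hence at most k-1. *)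
From mathcomp Require Import all_boot.
From mathcomp Require Import zify.

Set Implicit Arguments.
Unset Strict Implicit.
Unset Printing Implicit Defensive.

Lemma nobs_le_wlen (V VH : finType) (AH : rel VH) (rho : V -> V -> VH)
    (p : seq V) :
  nobs AH rho p <= (wlen p).-1.
Proof.
rewrite /wlen; elim: p => [|x [|y [|z t]] IH] //=.
by move: IH; case: (AH _ _) => /=; lia.
Qed.

Lemma hlen_le_wlen (V VH : finType) (AH : rel VH) (rho : V -> V -> VH)
    (p : seq V) :
  0 < wlen p -> hlen AH rho p <= wlen p.
Proof. by rewrite /hlen; have := nobs_le_wlen AH rho p; lia. Qed.

Section Paths.
Variables (V : finType) (A : rel V).

Lemma dpath_connect (x y : V) (p : seq V) :
  dpath_from_to A x y p -> connect A x y.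
Proof.
case: p => [|z q] //; rewrite /dpath_from_to /=.
by case/and3P=> /and3P[zq _ _] /eqP <- /eqP <-; apply/connectP; exists q.
Qed.

Lemma connect_dpath (x y : V) :
  connect A x y -> exists p, dpath_from_to A x y p.
Proof.
case/connectP=> p xp ->; case: (shortenP xp) => q xq uq _.
by exists (x :: q); rewrite /dpath_from_to /dpath xq uq /= !eqxx.
Qed.

Lemma dpath_wlen0 (x y : V) (p : seq V) :
  dpath_from_to A x y p -> wlen p = 0 -> x = y.
Proof.
case: p => [|z [|w q]] //; rewrite /dpath_from_to /=.
by case/andP=> /eqP <- /eqP.
Qed.

Variable r : nat.
Hypotheses (r_ge2 : 2 <= r) (A_rtrans : r_transitive A r).

(* Split the path as x :: p1 ++ p2 with size p1 = r; the chord from x to the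
   last vertex of p1 bypasses the r-1 inner vertices of p1. *)
Lemma r_transitive_shortcut (x y : V) (p : seq V) :
  dpath_from_to A x y p -> r <= wlen p ->
  exists q, dpath_from_to A x y q && (wlen q < wlen p).
Proof.
case: p => [|x' p] //; rewrite /dpath_from_to /wlen /=.
case/and3P=> /and3P[xp xNp up] /eqP x'x /eqP <-; subst x' => r_le.
rewrite -(cat_take_drop r p) in xp xNp up *.
set p1 := take r p; set p2 := drop r p; set z := last x p1.
have size_p1 : size p1 = r by rewrite size_take; case: ltngtP r_le.
have z_p1 : z \in p1.
  by rewrite /z; case: (p1) size_p1 => [|w s] /=; [lia | rewrite mem_last].
move: xp xNp up; rewrite cat_path mem_cat negb_or cat_uniq.
case/andP=> xp1 zp2 /andP[xNp1 xNp2] /and3P[up1 dis up2].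
have x_z : x != z by apply: contraNneq xNp1 => ->.
have zNp2 : z \notin p2 by apply: contra dis => zp2'; apply/hasP; exists z.
have Axz : A x z.
  apply: (A_rtrans x_z); exists (x :: p1).
  by rewrite /dpath_from_to /dpath /= xp1 xNp1 up1 !eqxx /wlen /= size_p1 eqxx.
exists (x :: z :: p2); rewrite /dpath /= Axz zp2 inE negb_or x_z xNp2 zNp2 up2.
by rewrite /z last_cat /= size_cat size_p1 !eqxx /=; lia.
Qed.

Lemma r_transitive_short_dpath (x y : V) :
  connect A x y -> exists p, dpath_from_to A x y p && (wlen p < r).
Proof.
case/connect_dpath=> p; elim: {p}(wlen p).+1 {-2}p (ltnSn (wlen p)) => // n IH p.
move=> p_lt xyp; case: (ltnP (wlen p) r) => [p_short | p_long].
  by exists p; rewrite xyp p_short.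
case/(r_transitive_shortcut xyp): p_long => q /andP[xyq q_lt].
by apply: (IH q) => //; apply: leq_trans q_lt _.
Qed.

End Paths.

Section TerminalRepresentatives.
Variables (V : finType) (A : rel V).

Definition terminal (s : V) : bool :=
  [forall w, connect A s w ==> connect A w s].

(* A terminal strong component is represented by its vertex of least rank. *)
Definition terminal_reps : {set V} :=
  [set s | [forall w, connect A s w ==> connect A w s && (enum_rank s <= enum_rank w)]].

Lemma terminal_reps_unreachable (u v : V) :
  u \in terminal_reps -> v \in terminal_reps -> connect A u v -> u = v.
Proof.
rewrite !inE => /forallP uS /forallP vS uv.
case/andP: (implyP (uS v) uv) => vu le_uv.
case/andP: (implyP (vS u) vu) => _ le_vu.
by apply: enum_rank_inj; apply: val_inj; apply/eqP; rewrite eqn_leq le_uv.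
Qed.

(* Minimising the size of the reachable set forces every successor to reach back. *)
Lemma connect_terminal (x : V) : exists2 s, connect A x s & terminal s.
Proof.
pose reach z := #|[set y | connect A z y]|.
case: (arg_minnP reach (connect0 A x)) => s xs s_min.
exists s => //; apply/forallP => w; apply/implyP => sw.
have sub : [set y | connect A w y] \subset [set y | connect A s y].
  by apply/subsetP => y; rewrite !inE; apply: connect_trans.
have /subset_cardP/(_ sub) eq_reach : reach w = reach s.
  by apply/eqP; rewrite eqn_leq subset_leq_card // s_min // (connect_trans xs).
by have := connect0 A s; rewrite -(in_set (connect A s)) -eq_reach inE.
Qed.

Lemma terminal_reps_absorbing (x : V) :
  exists2 s, s \in terminal_reps & connect A x s.
Proof.
case: (connect_terminal x) => t xt /forallP t_term.
case: (arg_minnP (fun y => val (enum_rank y)) (connect0 A t)) => s ts s_min.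
exists s; last exact: connect_trans xt ts.
rewrite inE; apply/forallP => w; apply/implyP => sw.
have tw := connect_trans ts sw.
by rewrite s_min // andbT (connect_trans (implyP (t_term w) tw)).
Qed.

End TerminalRepresentatives.

Theorem corollary12 (VH : finType) (AH : rel VH)
  (V : finType) (A : rel V) (rho : V -> V -> VH) (r : nat) :
  2 <= r ->
  irreflexive A ->
  r_transitive A r ->
  forall k : nat, r <= k ->
    exists S : {set V}, kH_kernel A AH rho k S.
Proof.
move=> r_ge2 _ A_rtrans k r_le_k; exists (terminal_reps A); split.
  move=> u v uS vS /eqP u_v p /dpath_connect uv.
  by case: u_v; apply: terminal_reps_unreachable uv.
move=> x xNS; case: (terminal_reps_absorbing A x) => s sS xs.
case: (r_transitive_short_dpath r_ge2 A_rtrans xs) => p /andP[xsp p_short].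
have p_pos : 0 < wlen p.
  by case: posnP => // /(dpath_wlen0 xsp) x_s; rewrite x_s sS in xNS.
exists s, p; rewrite sS xsp /=.
by have := hlen_le_wlen AH rho p_pos; lia.
Qed.
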